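(* Let $G$ be a finite, simple, connected graph of order $n\ge 4$, and let $u,w_1,w_2\in V(G)$ with $\deg(u)=n-3$ and $V(G)=N[u]\cup\{w_1,w_2\}$. Then $\{u\}$ is a power dominating set of $G$ if and only if $w_1$ and $w_2$ are not twins.
   Context: Two vertices $x,y$ are twins if $N(x)=N(y)$ or $N[x]=N[y]$. For $U\subseteq V(G)$, $cl(U)$ is obtained by coloring $U$ black and repeatedly applying: if a black vertex has exactly one white neighbor, that neighbor becomes black. $S$ is a power dominating set if $cl(N[S])=V(G)$. *)

From mathcomp Require Import all_boot.
Set Implicit Arguments. Unset Strict Implicit. Unset Printing Implicit Defensive.

Definition simple_graph (T : finType) (e : rel T) : Prop :=
  symmetric e /\ irreflexive e.

Definition connected_graph (T : finType) (e : rel T) : Prop :=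
  forall x y : T, connect e x y.

Definition N (T : finType) (e : rel T) (x : T) : {set T} := [set y | e x y].
Definition Nc (T : finType) (e : rel T) (x : T) : {set T} := x |: N e x.
Definition NS (T : finType) (e : rel T) (S : {set T}) : {set T} :=
  \bigcup_(x in S) Nc e x.

Definition deg (T : finType) (e : rel T) (x : T) : nat := #|N e x|.

Definition twins (T : finType) (e : rel T) (x y : T) : Prop :=
  N e x = N e y \/ Nc e x = Nc e y.

(* one round of the color-change rule (applied to all forcing vertices at once):
   a black vertex v with exactly one white neighbour x forces x. *)
Definition force_step (T : finType) (e : rel T) (B : {set T}) : {set T} :=
  B :|: [set x | [exists v in B, N e v :\: B == [set x]]].

(* closure: iterate the rule until stable; #|T| rounds suffice since every
   non-final round blackens at least one vertex *)
Definition cl (T : finType) (e : rel T) (U : {set T}) : {set T} :=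
  iter #|T| (force_step e) U.

Definition power_dominating (T : finType) (e : rel T) (S : {set T}) : Prop :=
  cl e (NS e S) = [set: T].

From mathcomp Require Import all_boot zify.

Set Implicit Arguments.
Unset Strict Implicit.
Unset Printing Implicit Defensive.

(* Once N[u] is black, only w1 and w2 are white.  A black vertex forces one of
   them exactly when it is adjacent to one but not the other; u is adjacent to
   neither, and w1, w2 are twins exactly when every vertex of N(u) is adjacent
   to both or to neither.  So for twins N[u] is already closed, while otherwise
   some neighbour of u forces, say, w1, after which any neighbour of w2 (one
   exists by connectivity) is black with w2 as its only white neighbour. *)

Lemma in_N (T : finType) (e : rel T) x y : (y \in N e x) = e x y.
Proof. by rewrite inE. Qed.

Section ForcingRule.

Variables (T : finType) (e : rel T).

Lemma force_step_subset (B : {set T}) : B \subset force_step e B.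
Proof. exact: subsetUl. Qed.

Lemma mem_force_step (B : {set T}) v x :
  v \in B -> N e v :\: B = [set x] -> x \in force_step e B.
Proof.
move=> vB white_v; rewrite inE; apply/orP; right.
by rewrite inE; apply/exists_inP; exists v; rewrite // white_v.
Qed.

Lemma cl_fix (B : {set T}) : force_step e B = B -> cl e B = B.
Proof. exact: iter_fix. Qed.

Lemma cl_eq_setT (B : {set T}) k :
  k <= #|T| -> iter k (force_step e) B = [set: T] -> cl e B = [set: T].
Proof.
move=> /subnK le_k full; rewrite /cl -le_k iterD full.
by apply/iter_fix/setUidPl; apply: subsetT.
Qed.

End ForcingRule.

Section TwoWhiteVertices.

Variables (T : finType) (e : rel T) (B : {set T}) (a b : T).
Hypotheses (e_sym : symmetric e) (e_irr : irreflexive e).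
Hypotheses (B_compl : ~: B = [set a; b]) (a_neq_b : a != b).

Lemma notin_B x : (x \notin B) = (x == a) || (x == b).
Proof. by rewrite -in_setC B_compl in_set2. Qed.

Lemma a_notin_B : a \notin B.
Proof. by rewrite notin_B eqxx. Qed.

Lemma b_notin_B : b \notin B.
Proof. by rewrite notin_B eqxx orbT. Qed.

Lemma force_step_agree :
  {in B, forall v, e v a = e v b} -> force_step e B = B.
Proof.
move=> agree; apply/setUidPl/subsetP => x.
rewrite inE => /exists_inP[v vB /eqP white_v].
have [va vb] : e v a /\ e v b.
  have : x \in N e v :\: B by rewrite white_v set11.
  rewrite in_setD notin_B in_N => /andP[/orP[] /eqP-> vx].
  - by rewrite -agree.
  - by rewrite agree.
have : a \in N e v :\: B by rewrite in_setD a_notin_B in_N.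
have : b \in N e v :\: B by rewrite in_setD b_notin_B in_N.
rewrite white_v !in_set1 => /eqP bx /eqP ax.
by move: a_neq_b; rewrite ax bx eqxx.
Qed.

Lemma iter2_force_step_full v y :
  v \in B -> e v a -> ~~ e v b -> e y b -> iter 2 (force_step e) B = [set: T].
Proof.
move=> vB va vb yb; set B1 := force_step e B.
have aB1 : a \in B1.
  apply: (mem_force_step vB); apply/setP => x.
  rewrite in_setD in_N in_set1 notin_B.
  case: (eqVneq x a) => [->|_ /=]; first by rewrite va.
  by case: (eqVneq x b) => [->|]; rewrite ?(negbTE vb) ?andbF.
have B1_full x : x != b -> x \in B1.
  move=> xb; case: (boolP (x \in B)) => [/(subsetP (force_step_subset e B)) //|].
  by rewrite notin_B (negbTE xb) orbF => /eqP->.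
have bB2 : b \in force_step e B1.
  case: (boolP (b \in B1)) => [/(subsetP (force_step_subset e B1)) //| bB1].
  have yB1 : y \in B1 by apply: B1_full; apply: contraTneq yb => ->; rewrite e_irr.
  apply: (mem_force_step yB1); apply/setP => x.
  rewrite in_setD in_N in_set1; case: (eqVneq x b) => [->|xb]; first by rewrite bB1.
  by rewrite B1_full.
apply/eqP; rewrite eqEsubset subsetT; apply/subsetP => x _.
case: (eqVneq x b) => [-> //|xb].
exact/(subsetP (force_step_subset e B1))/B1_full.
Qed.

Lemma twins_iff_agree : twins e a b <-> {in B, forall v, e v a = e v b}.
Proof.
have B_neq v : v \in B -> (v != a) && (v != b).
  by rewrite -negb_or -notin_B => ->.
split.
- move=> twins_ab v /B_neq /andP[va vb]; rewrite ![e v _]e_sym -!in_N.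
  case: twins_ab => [-> // | /setP/(_ v)].
  by rewrite !in_setU1 (negbTE va) (negbTE vb).
- move=> agree; case: (boolP (e a b)) => ab; [right | left]; apply/setP => x;
    rewrite ?in_setU1 !in_N; case: (boolP (x \in B)) => [xB | ].
  + by case/andP: (B_neq x xB) => /negbTE-> /negbTE->; rewrite (e_sym a) (e_sym b) agree.
  + rewrite notin_B => /orP[] /eqP->; first by rewrite eqxx (e_sym b) ab orbT.
    by rewrite eqxx ab orbT.
  + by rewrite (e_sym a) (e_sym b) agree.
  + rewrite notin_B => /orP[] /eqP->; rewrite e_irr; last by rewrite (negbTE ab).
    by rewrite (e_sym b) (negbTE ab).
Qed.

End TwoWhiteVertices.

Lemma cl_eq_setT_iff_not_twins (T : finType) (e : rel T) (B : {set T}) a b :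
  symmetric e -> irreflexive e -> ~: B = [set a; b] -> a != b ->
  (forall x, exists y, e y x) ->
  cl e B = [set: T] <-> ~ twins e a b.
Proof.
move=> e_sym e_irr B_compl ab has_nbr; rewrite (twins_iff_agree e_sym e_irr B_compl).
have two_le_T : 2 <= #|T| by have := max_card [set a; b]; rewrite cards2 ab.
split=> [full agree | disagree].
  have := a_notin_B B_compl.
  by rewrite -(cl_fix (force_step_agree B_compl ab agree)) full inE.
have [v vB] : exists2 v, v \in B & e v a != e v b.
  case: (boolP [exists v in B, e v a != e v b]) => [/exists_inP // | /exists_inPn agree].
  by case: disagree => v /agree /negPn /eqP.
case va: (e v a) => /= vb.
- have [y yb] := has_nbr b.
  exact: cl_eq_setT two_le_T (iter2_force_step_full e_irr B_compl vB va vb yb).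
- have [y ya] := has_nbr a.
  have B_compl' : ~: B = [set b; a] by rewrite B_compl setUC.
  rewrite negbK in vb.
  exact: cl_eq_setT two_le_T (iter2_force_step_full e_irr B_compl' vB vb (negbT va) ya).
Qed.

Lemma connected_has_neighbour (T : finType) (e : rel T) :
  symmetric e -> connected_graph e -> 1 < #|T| -> forall x, exists y, e y x.
Proof.
move=> e_sym conn /card_gt1P[y [z [_ _ yz]]] x.
have [w wx] : exists w, w != x.
  by case: (eqVneq y x) => [<-|yx]; [exists z; rewrite eq_sym | exists y].
have /connectP[[|t p] /= xw_path w_last] := conn x w.
  by rewrite w_last eqxx in wx.
by case/andP: xw_path => xt _; exists t; rewrite e_sym.
Qed.

Lemma setC_eq_two_of_cover (T : finType) (A : {set T}) a b :
  #|A| + 2 = #|T| -> [set: T] = A :|: [set a; b] ->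
  ~: A = [set a; b] /\ a != b.
Proof.
move=> cardA cover.
have compl_sub : ~: A \subset [set a; b].
  apply/subsetP => x; rewrite inE => xA.
  by have : x \in [set: T] by []; rewrite cover in_setU (negbTE xA).
have card_compl : #|~: A| = 2 by have := cardsC A; lia.
have compl_eq : ~: A = [set a; b].
  by apply/eqP; rewrite eqEcard compl_sub card_compl cards2; case: (a != b).
by split=> //; have := cards2 a b; rewrite -compl_eq card_compl; case: (a != b).
Qed.

Theorem mainTheorem6 (T : finType) (e : rel T) (u w1 w2 : T) :
  simple_graph e -> connected_graph e -> 4 <= #|T| ->
  deg e u = #|T| - 3 ->
  [set: T] = Nc e u :|: [set w1; w2] ->
  (power_dominating e [set u] <-> ~ twins e w1 w2).
Proof.
move=> [e_sym e_irr] conn n_ge4 deg_u cover.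
have card_Nc : #|Nc e u| + 2 = #|T|.
  by rewrite cardsU1 in_N e_irr -/(deg e u) deg_u; lia.
have [Nc_compl w12] := setC_eq_two_of_cover card_Nc cover.
rewrite /power_dominating /NS big_set1.
apply: cl_eq_setT_iff_not_twins => //.
by apply: connected_has_neighbour => //; lia.
Qed.
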